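(* Let $\xi\in\mathbb{F}_q((T^{-1}))\setminus\mathbb{F}_q(T)$. Assume that there exists a sequence $(\alpha_j)_{j\ge1}$ such that for every $j\ge1$, $\alpha_j\in\overline{\mathbb{F}_q(T)}$ is quadratic with $\alpha_j\ne\alpha_j'$ and $\xi\ne\alpha_j$, and $(H(\alpha_j))_{j\ge1}$ is a divergent increasing sequence. If the limits \[ \gamma_1:=\lim_{j\to\infty}\frac{-\log|\xi-\alpha_j|}{\log H(\alpha_j)},\qquad \gamma_2:=\lim_{j\to\infty}\frac{-\log|\alpha_j-\alpha_j'|}{\log H(\alpha_j)} \] exist, then $w_2^*(\xi)\ge\gamma_1-1$ and $w_2(\xi)\ge\gamma_1+\gamma_2-1$.
   Context: $\mathbb{F}_q((T^{-1}))$ is the field of Laurent series over $\mathbb{F}_q$ with absolute value $|\xi|=q^{-N}$ for $\xi=\sum_{j\ge N}a_jT^{-j}$, $a_N\ne0$, $|0|=0$, extended uniquely to an algebraic closure. For a quadratic $\alpha\in\overline{\mathbb{F}_q(T)}$, $\alpha'$ denotes its Galois conjugate distinct from $\alpha$ if $\alpha$ is separable, and $\alpha':=\alpha$ if it is inseparable. The height $H(P)$ of $P\in(\mathbb{F}_q[T])[X]$ is the maximum absolute value of its coefficients; $H(\alpha)$ is the height of the minimal polynomial of $\alpha$ (the unique non-constant irreducible primitive polynomial in $(\mathbb{F}_q[T])[X]$ with leading coefficient monic in $T$ vanishing at $\alpha$). $w_2(\xi)$ is the supremum of real $w$ with $0<|P(\xi)|\le H(P)^{-w}$ for infinitely many $P\in(\mathbb{F}_q[T])[X]$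 of degree $\le2$, and $w_2^*(\xi)$ is the supremum of real $w^*$ with $0<|\xi-\alpha|\le H(\alpha)^{-w^*-1}$ for infinitely many algebraic $\alpha$ of degree $\le2$. *)

From HB Require Import structures.
From mathcomp Require Import all_boot all_order all_algebra.
From mathcomp Require Import all_classical all_reals all_analysis.
Set Implicit Arguments. Unset Strict Implicit. Unset Printing Implicit Defensive.
Import Order.TTheory GRing.Theory Num.Theory.
Local Open Scope ring_scope.
Local Open Scope classical_set_scope.

(* F is the finite field F_q (q = #|F|).  L is an algebraically
   closed field, iF : F -> L the embedding of constants, t : L the image of
   the indeterminate T (assumed transcendental), and absv : L -> R a
   non-archimedean absolute value with |c| = 1 for c in F^*, |t| = q; its
   restriction to F_q(T) is the T^{-1}-adic absolute value of the paper.
   F_q((T^{-1})) is realized as the closure of F_q(t) in L. *)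

Section Defs.
Variables (F : finFieldType) (L : closedFieldType) (R : realType).
Variables (iF : {rmorphism F -> L}) (t : L) (absv : L -> R).

Definition evT (p : {poly F}) : L := (map_poly iF p).[t].

Definition evP (P : {poly {poly F}}) (x : L) : L := (map_poly evT P).[x].

Definition is_abs_value : Prop :=
  [/\ forall x, 0 <= absv x,
      forall x, absv x = 0 <-> x = 0,
      forall x y, absv (x * y) = absv x * absv y,
      forall x y, absv (x + y) <= Num.max (absv x) (absv y)
    & (forall c : F, c != 0 -> absv (iF c) = 1) /\ absv t = (#|F|%:R : R)].

Definition transcendental_T : Prop := forall p : {poly F}, evT p = 0 -> p = 0.

Definition in_FqT (x : L) : Prop :=
  exists p s : {poly F}, s != 0 /\ x = evT p / evT s.

Definition in_Laurent (x : L) : Prop :=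
  forall e : R, 0 < e -> exists p s : {poly F},
    s != 0 /\ absv (x - evT p / evT s) < e.

Definition absT (p : {poly F}) : R :=
  if p == 0 then 0 else (#|F|%:R : R) ^+ (size p).-1.

Definition height (P : {poly {poly F}}) : R :=
  \big[Num.max/0]_(i < size P) absT P`_i.

Definition primitive (P : {poly {poly F}}) : Prop :=
  forall d : {poly F}, (forall i, d %| P`_i) -> size d = 1%N.

Definition irreducible_elt (P : {poly {poly F}}) : Prop :=
  [/\ P != 0, ~~ (P \is a GRing.unit)
    & forall A B : {poly {poly F}}, P = A * B ->
        A \is a GRing.unit \/ B \is a GRing.unit].

Definition is_minpoly (alpha : L) (P : {poly {poly F}}) : Prop :=
  [/\ (1 < size P)%N, irreducible_elt P, primitive P,
      lead_coef P \is monic & evP P alpha = 0].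

Definition w2 (xi : L) : \bar R :=
  ereal_sup [set w%:E | w in [set w : R |
    ~ finite_set [set P : {poly {poly F}} | (size P <= 3)%N /\
        0 < absv (evP P xi) /\ absv (evP P xi) <= height P `^ (- w)]]].

Definition w2star (xi : L) : \bar R :=
  ereal_sup [set w%:E | w in [set w : R |
    ~ finite_set [set alpha : L | exists P, is_minpoly alpha P /\
        (size P <= 3)%N /\
        0 < absv (xi - alpha) /\ absv (xi - alpha) <= height P `^ (- w - 1)]]].

End Defs.

Arguments absT {F R} p.
Arguments height {F R} P.

From HB Require Import structures.
From mathcomp Require Import all_boot all_order all_algebra.
From mathcomp Require Import all_classical all_reals all_analysis.
From mathcomp Require Import ring lra zify.
Import Order.TTheory GRing.Theory Num.Theory numFieldNormedType.Exports.
Set Implicit Arguments. Unset Strict Implicit. Unset Printing Implicit Defensive.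
Local Open Scope ring_scope.
Local Open Scope classical_set_scope.

(* Write H_j for the height of alpha_j.  Eventually |xi - alpha_j| <= H_j^(-c)
   for every c < g1, which gives w2^*(xi) >= g1 - 1 directly; the rationals
   f + T^-k within distance 1 of xi give w2^*(xi) >= -1, covering g1 <= 0.
   For w2, the minimal polynomial factors as P_j = A_j (X - alpha_j)(X - alpha_j').
   Its discriminant A_j^2 (alpha_j - alpha_j')^2 is a nonzero element of F_q[T],
   so |A_j| |alpha_j - alpha_j'| >= 1, whence g2 <= 1.  If g1 + g2 > 2 this forces
   g1 > g2: xi is much closer to alpha_j than alpha_j' is, so the ultrametric
   inequality gives |xi - alpha_j'| = |alpha_j - alpha_j'| and
   |P_j(xi)| <= H_j^(1 - g1 - g2 + eps).  Otherwise the Dirichlet bound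
   w2(xi) >= 1, obtained from linear polynomials by pigeonhole, suffices. *)

Definition ultrametric_abs (K : ringType) (R : realDomainType) (absv : K -> R) :=
  [/\ forall x, 0 <= absv x, forall x, absv x = 0 <-> x = 0,
      {morph absv : x y / x * y}
    & forall x y, absv (x + y) <= Num.max (absv x) (absv y)].

Section UltrametricAbsoluteValue.
Variables (K : fieldType) (R : realFieldType) (absv : K -> R).
Hypothesis habs : ultrametric_abs absv.

Lemma absv_ge0 x : 0 <= absv x. Proof. by case: habs. Qed.
Lemma absv_eq0 x : absv x = 0 <-> x = 0. Proof. by case: habs. Qed.
Lemma absvM x y : absv (x * y) = absv x * absv y. Proof. by case: habs. Qed.
Lemma absvD_le_max x y : absv (x + y) <= Num.max (absv x) (absv y).
Proof. by case: habs. Qed.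

Lemma absv0 : absv 0 = 0. Proof. exact/absv_eq0. Qed.

Lemma absv_gt0 x : x != 0 -> 0 < absv x.
Proof. by move=> x0; rewrite lt_def absv_ge0 andbT; apply: contra x0 => /eqP/absv_eq0->. Qed.

Lemma absv1 : absv 1 = 1.
Proof.
have a1_gt0 : 0 < absv 1 by rewrite absv_gt0 ?oner_neq0.
by apply: (mulfI (lt0r_neq0 a1_gt0)); rewrite -absvM !mulr1.
Qed.

Lemma absvN x : absv (- x) = absv x.
Proof.
suff aN1 : absv (-1) = 1 by rewrite -mulN1r absvM aN1 mul1r.
have := absvM (-1) (-1); rewrite mulrNN mulr1 absv1 => /esym/eqP.
by rewrite -expr2 sqrf_eq1 => /orP[/eqP //|/eqP aN1]; have := absv_ge0 (-1); lra.
Qed.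

Lemma absvV x : absv x^-1 = (absv x)^-1.
Proof.
have [->|x0] := eqVneq x 0; first by rewrite invr0 absv0 invr0.
apply: (mulfI (lt0r_neq0 (absv_gt0 x0))).
by rewrite -absvM !mulfV ?absv1 // lt0r_neq0 // absv_gt0.
Qed.

Lemma absvX x n : absv (x ^+ n) = absv x ^+ n.
Proof. by elim: n => [|n IH]; rewrite ?absv1 // !exprS absvM IH. Qed.

Lemma absvD_le x y e : absv x <= e -> absv y <= e -> absv (x + y) <= e.
Proof. by move=> xe ye; apply: le_trans (absvD_le_max x y) _; rewrite ge_max xe. Qed.

Lemma absvD_lt x y e : absv x < e -> absv y < e -> absv (x + y) < e.
Proof. by move=> xe ye; apply: le_lt_trans (absvD_le_max x y) _; rewrite gt_max xe. Qed.

Lemma absvD_dominant x y : absv x < absv y -> absv (x + y) = absv y.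
Proof.
move=> xy; apply/eqP; rewrite eq_le absvD_le ?(ltW xy) //=.
rewrite leNgt; apply/negP => sum_lt.
have : absv ((x + y) + - x) < absv y by rewrite absvD_lt ?absvN.
by rewrite addrC addKr ltxx.
Qed.

End UltrametricAbsoluteValue.

Section RealExponents.
Variable R : realType.
Implicit Types y H a b c e : R.

Lemma powR_expR H a : 0 < H -> H `^ a = expR (a * ln H).
Proof. by move=> H0; rewrite /powR gt_eqF. Qed.

Lemma ltr_powR_gt1 H a b : 1 < H -> a < b -> H `^ a < H `^ b.
Proof. by move=> H1 ab; rewrite !powR_expR ?ltr_expR ?ltr_pM2r ?ln_gt0 //; lra. Qed.

Lemma powR_exponent y H : 0 < y -> 1 < H -> H `^ (- (- ln y / ln H)) = y.
Proof.
move=> y0 H1; rewrite powR_expR; last lra.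
by rewrite mulNr divfK ?opprK ?lnK // gt_eqF // ln_gt0.
Qed.

Lemma le_powRN_exponent y H c : 0 < y -> 1 < H -> c <= - ln y / ln H -> y <= H `^ (- c).
Proof.
move=> y0 H1 cr; rewrite -{1}(powR_exponent y0 H1).
by apply: ler_powR; [lra | rewrite lerN2].
Qed.

Lemma ge_powRN_exponent y H c : 0 < y -> 1 < H -> - ln y / ln H <= c -> H `^ (- c) <= y.
Proof.
move=> y0 H1 rc; rewrite -{1}(powR_exponent y0 H1).
by apply: ler_powR; [lra | rewrite lerN2].
Qed.

Lemma powRN_le a b c : 0 < a -> a <= b -> 0 <= c -> b `^ (- c) <= a `^ (- c).
Proof.
move=> a0 ab c0; rewrite !powRN lef_pV2 ?posrE ?powR_gt0 ?(lt_le_trans a0) //.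
by apply: ge0_ler_powR; rewrite // nnegrE ltW // (lt_le_trans a0).
Qed.

Lemma powRN_small c e : 0 < c -> 0 < e -> exists M, forall H, M < H -> H `^ (- c) < e.
Proof.
move=> c0 e0; exists (expR (- ln e / c)) => H MH.
have H0 : 0 < H by apply: lt_trans MH; exact: expR_gt0.
rewrite powR_expR // -[e]lnK ?posrE // ltr_expR mulNr ltrNl.
have : - ln e / c < ln H by rewrite -ltr_expR lnK ?posrE.
by rewrite ltr_pdivrMr // mulrC.
Qed.

Lemma le_ereal_sup_itv (A : set R) a b : a < b -> `]a, b[ `<=` A ->
  (b%:E <= ereal_sup [set w%:E | w in A])%E.
Proof.
move=> ab sA; apply: le_trans (le_ereal_sup (image_subset EFin sA)).
rewrite ereal_sup_EFin ?sup_itv ?bnd_simp //.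
by exists ((a + b) / 2); rewrite /= in_itv /=; apply/andP; split; lra.
Qed.

Lemma infinite_of_small_values (T : choiceType) (S : set T) (g : T -> R) :
  (forall e, 0 < e -> exists x, S x /\ 0 < g x < e) -> infinite_set S.
Proof.
pose m (s : seq T) := \big[Num.min/1]_(y <- s | 0 < g y) g y.
have m_gt0 (s : seq T) : 0 < m s.
  by apply: (big_ind (fun v => 0 < v)) => // u v; rewrite lt_min => ->.
have m_le (s : seq T) (y : T) : y \in s -> 0 < g y -> m s <= g y.
  elim: s => // z s IH; rewrite in_cons /m big_cons => /orP[/eqP<- ->|ys gy].
    by rewrite ge_min lexx.
  by case: ifP => _; rewrite ?ge_min IH ?orbT.
move=> small /finite_seqP[s Ss].
have [x [Sx /andP[gx_gt0 gx_lt]]] := small _ (m_gt0 s).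
have xs : x \in s by move: Sx; rewrite Ss.
by move: gx_lt; rewrite ltNge m_le.
Qed.

End RealExponents.

Lemma quadratic_vieta (K : fieldType) (A B C a b : K) : a != b ->
  C + B * a + A * a ^+ 2 = 0 -> C + B * b + A * b ^+ 2 = 0 ->
  B = - (A * (a + b)) /\ C = A * a * b.
Proof.
move=> ab ra rb.
have : (a - b) * (B + A * (a + b)) = 0.
  by rewrite -[RHS](subrr 0) -{1}ra -rb; ring.
move/eqP; rewrite mulf_eq0 subr_eq0 (negPf ab) addr_eq0 => /eqP B_eq; split => //.
by apply/eqP; rewrite -subr_eq0 -ra B_eq; apply/eqP; ring.
Qed.

Lemma unit_polyC (F : fieldType) (c : {poly F}) : size c = 1%N -> c%:P \is a GRing.unit.
Proof.
move=> sc; apply: rmorph_unit; rewrite poly_unitE sc unitfE /=.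
by rewrite -[0%N]/(1.-1) -sc -lead_coefE lead_coef_eq0 -size_poly_eq0 sc.
Qed.

Lemma primitive_size2_irreducible (F : finFieldType) (P : {poly {poly F}}) :
  size P = 2%N -> primitive P -> irreducible_elt P.
Proof.
move=> sP Pprim; split; [by rewrite -size_poly_eq0 sP | by rewrite poly_unitE sP |].
move=> A B PAB; have : A * B != 0 by rewrite -PAB -size_poly_eq0 sP.
rewrite mulf_eq0 negb_or => /andP[A0 B0].
have sA : (0 < size A)%N by rewrite size_poly_gt0.
have sB : (0 < size B)%N by rewrite size_poly_gt0.
have sAB : ((size A + size B) - 1 = 2)%N by rewrite subn1 -size_mul // -PAB.
have [sA1|sB1] : size A = 1%N \/ size B = 1%N by lia.
- left; have [c Ac] : exists c, A = c%:P by exists A`_0; rewrite [LHS]size1_polyC ?sA1.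
  by rewrite Ac; apply/unit_polyC/Pprim => i; rewrite PAB Ac coefCM dvdp_mulIl.
- right; have [c Bc] : exists c, B = c%:P by exists B`_0; rewrite [LHS]size1_polyC ?sB1.
  by rewrite Bc; apply/unit_polyC/Pprim => i; rewrite PAB Bc coefMC dvdp_mulIr.
Qed.

Fact evT_commr (F : finFieldType) (L : closedFieldType) (iF : {rmorphism F -> L}) (t : L) :
  commr_rmorph iF t.
Proof. by move=> c; exact: mulrC. Qed.

HB.instance Definition _ (F : finFieldType) (L : closedFieldType) (iF : {rmorphism F -> L}) t :=
  GRing.RMorphism.copy (evT iF t) (horner_morph (evT_commr iF t)).

Section FunctionFieldApproximation.
Variables (F : finFieldType) (L : closedFieldType) (R : realType).
Variables (iF : {rmorphism F -> L}) (t : L) (absv : L -> R).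
Hypotheses (habs : is_abs_value iF t absv) (htr : transcendental_T iF t).

Implicit Types (p r s : {poly F}) (x : L) (N : nat).

Local Notation q := (#|F|%:R : R).
Local Notation evT := (evT iF t).
Local Notation evP := (evP iF t).
Local Notation in_Laurent := (in_Laurent iF t absv).
Local Notation in_FqT := (in_FqT iF t).

Let hU : ultrametric_abs absv.
Proof. by case: habs => ? ? ? ? _; split. Qed.

Lemma q_gt1 : 1 < q.
Proof. by rewrite ltr1n card_finNzRing_gt1. Qed.

Lemma qexp_ge1 n : 1 <= q ^+ n.
Proof. by rewrite exprn_ege1 // ltW // q_gt1. Qed.

Lemma qexp_gt0 n : 0 < q ^+ n.
Proof. exact: lt_le_trans ltr01 (qexp_ge1 n). Qed.

Lemma absv_iF c : c != 0 -> absv (iF c) = 1.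
Proof. by case: habs => _ _ _ _ [+ _]; apply. Qed.

Lemma absv_t : absv t = q.
Proof. by case: habs => _ _ _ _ []. Qed.

Lemma t_neq0 : t != 0.
Proof. by apply: contraTneq q_gt1 => t0; rewrite -absv_t t0 (absv0 hU) ltr10. Qed.

Lemma evT_neq0 p : p != 0 -> evT p != 0.
Proof. by apply: contra => /eqP/htr->. Qed.

Lemma evTXn n : evT 'X^n = t ^+ n.
Proof. by rewrite /evT map_polyXn hornerXn. Qed.

Lemma absv_monomial_le c n : absv (iF c * t ^+ n) <= q ^+ n.
Proof.
rewrite (absvM hU) (absvX hU) absv_t.
have [->|c0] := eqVneq c 0; last by rewrite absv_iF // mul1r.
by rewrite rmorph0 (absv0 hU) mul0r ltW ?qexp_gt0.
Qed.

Lemma absv_sum_lt n (c : nat -> F) : absv (\sum_(i < n) iF (c i) * t ^+ i) < q ^+ n.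
Proof.
elim: n => [|n IH]; first by rewrite big_ord0 (absv0 hU) ltr01.
rewrite big_ord_recr /= exprS; apply: (@le_lt_trans _ _ (q ^+ n)).
  by rewrite (absvD_le hU) ?absv_monomial_le ?ltW.
by rewrite ltr_pMl ?q_gt1 ?qexp_gt0.
Qed.

Lemma absv_evT p : absv (evT p) = absT p.
Proof.
rewrite /absT; have [->|p0] := eqVneq p 0; first by rewrite rmorph0 (absv0 hU).
rewrite /evT horner_coef size_map_poly.
have := p0; rewrite -size_poly_eq0; case sp: (size p) => [//|n] _.
have lead0 : p`_n != 0 by rewrite -lead_coef_eq0 lead_coefE sp in p0.
have top : absv (iF p`_n * t ^+ n) = q ^+ n.
  by rewrite (absvM hU) (absvX hU) absv_t absv_iF ?mul1r.
rewrite big_ord_recr /= coef_map (absvD_dominant hU) top //.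
by under eq_bigr do rewrite coef_map; apply: absv_sum_lt.
Qed.

Lemma absT_ge0 p : 0 <= absT p :> R.
Proof. by rewrite -absv_evT absv_ge0. Qed.

Lemma absT_ge1 p : p != 0 -> 1 <= absT p :> R.
Proof. by move=> p0; rewrite /absT (negPf p0) qexp_ge1. Qed.

Lemma absTN p : absT (- p) = absT p :> R.
Proof. by rewrite -!absv_evT rmorphN (absvN hU). Qed.

Lemma absT_le_qexp p n : (size p <= n.+1)%N -> absT p <= q ^+ n.
Proof.
rewrite /absT; case: eqP => _ sp; first exact: ltW (qexp_gt0 n).
by rewrite ler_eXn2l ?q_gt1 //; case: (size p) sp.
Qed.

Lemma size_le_of_absT_lt p n : absT p < q ^+ n -> (size p <= n)%N.
Proof.
rewrite /absT; case: eqP => [->|p0]; first by rewrite size_poly0.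
by rewrite ltr_eXn2l ?q_gt1 // -ltnS prednK // size_poly_gt0; apply/eqP.
Qed.

Lemma absT_lt_size p r : (size p < size r)%N -> absT p < absT r :> R.
Proof.
move=> pr; have r0 : r != 0 by rewrite -size_poly_gt0 (leq_ltn_trans _ pr).
rewrite /absT (negPf r0); case: eqP => [_|/eqP p0]; first exact: qexp_gt0.
by rewrite ltr_eXn2l ?q_gt1 // -ltnS prednK ?size_poly_gt0 // (ltn_predK pr).
Qed.

Lemma height_ge0 (P : {poly {poly F}}) : 0 <= height P :> R.
Proof.
rewrite /height; apply: (big_ind (fun v => 0 <= v)) => // [u v u0 _|i _].
  by rewrite le_max u0.
exact: absT_ge0.
Qed.

Lemma absT_coef_le_height (P : {poly {poly F}}) i : absT P`_i <= height P :> R.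
Proof.
have [iP|Pi] := ltnP i (size P); last by rewrite nth_default // /absT eqxx height_ge0.
by rewrite /height (bigD1 (Ordinal iP)) //= le_max lexx.
Qed.

Lemma height_le (P : {poly {poly F}}) (M : R) :
  0 <= M -> (forall i, absT P`_i <= M) -> height P <= M.
Proof.
move=> M0 PM; rewrite /height.
by apply: (big_ind (fun v => v <= M)) => // u v; rewrite ge_max => ->.
Qed.

Lemma in_Laurent_affine x a b : in_Laurent x -> in_Laurent (evT a * x + evT b).
Proof.
move=> Lx e e_gt0; have [->|a0] := eqVneq a 0.
  by exists b, 1; rewrite oner_neq0 !rmorph0 rmorph1 mul0r add0r divr1 subrr (absv0 hU).
have aT_gt0 : 0 < absT a :> R by apply: lt_le_trans ltr01 (absT_ge1 a0).
have [p [s [s0 ps]]] := Lx (e / absT a) (divr_gt0 e_gt0 aT_gt0).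
exists (a * p + b * s), s; split => //.
have -> : evT a * x + evT b - evT (a * p + b * s) / evT s = evT a * (x - evT p / evT s).
  by rewrite rmorphD !rmorphM; field; apply: evT_neq0.
by rewrite (absvM hU) absv_evT mulrC -ltr_pdivlMr.
Qed.

Lemma in_Laurent_floor x : in_Laurent x -> exists f, absv (x - evT f) < 1.
Proof.
move=> Lx; have [u [v [v0 uv]]] := Lx 1 ltr01.
exists (u %/ v).
have -> : x - evT (u %/ v) = (x - evT u / evT v) + evT (u %% v) / evT v.
  by rewrite {2}(divp_eq u v) rmorphD rmorphM; field; apply: evT_neq0.
rewrite (absvD_lt hU) // (absvM hU) (absvV hU) !absv_evT.
have vT_gt0 : 0 < absT v :> R by apply: lt_le_trans ltr01 (absT_ge1 v0).
by rewrite ltr_pdivrMr // mul1r absT_lt_size // ltn_modp.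
Qed.

Lemma evP_quadratic (P : {poly {poly F}}) x : (size P <= 3)%N ->
  evP P x = evT P`_0 + evT P`_1 * x + evT P`_2 * x ^+ 2.
Proof.
move=> sP; rewrite /evP (horner_coef_wide (n := 3)) ?(leq_trans (size_poly _ _)) //.
by rewrite !big_ord_recr big_ord0 /= !coef_map /= add0r expr1 mulr1.
Qed.

Lemma coef_linear (c1 c0 : {poly F}) i :
  (c1%:P * 'X + c0%:P)`_i = if i == 0%N then c0 else if i == 1%N then c1 else 0.
Proof. by case: i => [|[|i]]; rewrite coefD coefMX !coefC ?add0r ?addr0. Qed.

Lemma size_linear (c1 c0 : {poly F}) : c1 != 0 -> size (c1%:P * 'X + c0%:P) = 2%N.
Proof. by move=> c10; rewrite size_MXaddC polyC_eq0 (negPf c10) size_polyC c10. Qed.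

Lemma is_minpoly_linear (c1 c0 : {poly F}) x :
  c1 \is monic -> (forall d, d %| c0 -> d %| c1 -> size d = 1%N) ->
  evT c1 * x + evT c0 = 0 -> is_minpoly iF t x (c1%:P * 'X + c0%:P).
Proof.
move=> c1_monic c_coprime root_x; have sP := size_linear c0 (monic_neq0 c1_monic).
split; first by rewrite sP.
- apply: primitive_size2_irreducible => // d dP.
  by apply: c_coprime; [have := dP 0%N | have := dP 1%N]; rewrite coef_linear.
- by move=> d dP; apply: c_coprime; [have := dP 0%N | have := dP 1%N]; rewrite coef_linear.
- by rewrite lead_coefE sP coef_linear.
- by rewrite evP_quadratic ?sP // !coef_linear rmorph0 mul0r addr0 addrC.
Qed.

Lemma evP_factor (Q : {poly {poly F}}) a b : size Q = 3%N -> a != b ->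
  evP Q a = 0 -> evP Q b = 0 -> forall x, evP Q x = evT Q`_2 * (x - a) * (x - b).
Proof.
move=> sQ ab; rewrite !evP_quadratic ?sQ // => ra rb x.
have [B_eq C_eq] := quadratic_vieta ab ra rb.
by rewrite evP_quadratic ?sQ // B_eq C_eq; ring.
Qed.

Lemma discriminant_bound (Q : {poly {poly F}}) a b : size Q = 3%N -> a != b ->
  evP Q a = 0 -> evP Q b = 0 -> 1 <= absv (evT Q`_2) * absv (a - b).
Proof.
move=> sQ ab; rewrite !evP_quadratic ?sQ // => ra rb.
have [B_eq C_eq] := quadratic_vieta ab ra rb.
have lead0 : Q`_2 != 0.
  by rewrite -[2%N]/(3.-1) -sQ -lead_coefE lead_coef_eq0 -size_poly_eq0 sQ.
pose D := Q`_1 ^+ 2 - Q`_2 * Q`_0 *+ 4.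
have evD : evT D = (evT Q`_2 * (a - b)) ^+ 2.
  by rewrite rmorphB rmorphMn rmorphXn !rmorphM /= B_eq C_eq; ring.
have D0 : D != 0.
  apply: contra_neq (evT_neq0 lead0) => D0; move: evD.
  rewrite D0 rmorph0 => /esym/eqP; rewrite sqrf_eq0 mulf_eq0 subr_eq0 (negPf ab) orbF.
  by move/eqP.
have := absT_ge1 D0; rewrite -absv_evT evD (absvX hU) (absvM hU).
have := mulr_ge0 (absv_ge0 hU (evT Q`_2)) (absv_ge0 hU (a - b)); nra.
Qed.

Lemma absv_evP_near_root (Q : {poly {poly F}}) a b x : size Q = 3%N -> a != b ->
  evP Q a = 0 -> evP Q b = 0 -> absv (x - a) < absv (a - b) ->
  absv (evP Q x) = absv (evT Q`_2) * absv (a - b) * absv (x - a).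
Proof.
move=> sQ ab ra rb xa_lt; rewrite (evP_factor sQ ab ra rb) !(absvM hU) mulrAC.
by rewrite -(absvD_dominant hU xa_lt) addrA subrK.
Qed.

Lemma qexpV_small e : 0 < e -> exists k, (q ^+ k)^-1 < e.
Proof.
move=> e_gt0; exists (Num.trunc e^-1).+1.
rewrite -ltf_pV2 ?posrE ?invr_gt0 ?qexp_gt0 // invrK.
apply: lt_trans (truncnS_gt _) _; rewrite -natrX ltr_nat ltn_expl //.
exact: card_finNzRing_gt1.
Qed.

Lemma w2star_geN1 xi : in_Laurent xi -> ~ in_FqT xi -> ((-1)%:E <= w2star iF t absv xi)%E.
Proof.
move=> Lxi xi_irr; have [f xi_f] := in_Laurent_floor Lxi.
apply: (@le_ereal_sup_itv _ _ (-2)) => [|w]; first lra.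
rewrite /= in_itv /= => /andP[w_gt w_lt].
apply: (@infinite_of_small_values _ _ _ (fun a => absv (a - evT f))) => e e_gt0.
have [k qk_lt] := qexpV_small e_gt0.
have tk0 : t ^+ k != 0 by rewrite expf_neq0 // t_neq0.
have absv_tkV : absv (t ^+ k)^-1 = (q ^+ k)^-1 by rewrite (absvV hU) (absvX hU) absv_t.
pose c0 := - (f * 'X^k + 1).
exists (evT f + (t ^+ k)^-1); split; last by rewrite addrC addKr absv_tkV invr_gt0 qexp_gt0.
have xi_neq : xi != evT f + (t ^+ k)^-1.
  apply: contra_notN xi_irr => /eqP->; exists (f * 'X^k + 1), 'X^k.
  rewrite monic_neq0 ?monicXn //; split => //.
  by rewrite rmorphD rmorphM rmorph1 /= !evTXn; field.
pose P := 'X^k%:P * 'X + c0%:P.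
have sP : size P = 2%N by rewrite size_linear ?monic_neq0 ?monicXn.
exists P; split; [|split; [by rewrite sP | split]].
- apply: is_minpoly_linear; first exact: monicXn.
    move=> d dc0 dXk; apply/eqP; rewrite -dvdp1 -(dvdp_addr _ (dvdp_mull f dXk)).
    by rewrite -dvdpNr.
  by rewrite rmorphN rmorphD rmorphM rmorph1 /= !evTXn; field.
- by rewrite absv_gt0 // subr_eq0.
- apply: (@le_trans _ _ 1).
    rewrite opprD addrA (absvD_le hU) ?(ltW xi_f) // (absvN hU) absv_tkV.
    by rewrite invf_le1 ?qexp_gt0 ?qexp_ge1.
  rewrite -[X in X <= _](powRr0 (height P)); apply: ler_powR; last lra.
  apply: le_trans (absT_coef_le_height _ 1%N); rewrite coef_linear.
  exact/absT_ge1/monic_neq0/monicXn.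
Qed.

Lemma in_Laurent_digits x N : in_Laurent x -> absv x < 1 ->
  exists g : {poly_N F}, absv (t ^+ N * x - evT g) < 1.
Proof.
move=> Lx x_lt1; have [g txg_lt] : exists g, absv (t ^+ N * x - evT g) < 1.
  by apply: in_Laurent_floor; have := in_Laurent_affine 'X^N 0 Lx; rewrite evTXn rmorph0 addr0.
have sg : (size g <= N)%N.
  apply: size_le_of_absT_lt; rewrite -absv_evT -[evT g](subKr (t ^+ N * x)).
  rewrite (absvD_lt hU) ?(absvN hU) ?(lt_le_trans txg_lt (qexp_ge1 N)) //.
  by rewrite (absvM hU) (absvX hU) absv_t -[X in _ < X]mulr1 ltr_pM2l ?qexp_gt0.
by exists (NPoly (sg : g \is a poly_of_size N)).
Qed.

Lemma absvB_lt_of_digits x1 x2 g N : absv (t ^+ N * x1 - evT g) < 1 ->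
  absv (t ^+ N * x2 - evT g) < 1 -> absv (x1 - x2) < (q ^+ N)^-1.
Proof.
move=> x1g x2g; have tN0 : t ^+ N != 0 by rewrite expf_neq0 // t_neq0.
have -> : x1 - x2 = (t ^+ N)^-1 * ((t ^+ N * x1 - evT g) - (t ^+ N * x2 - evT g)) by field.
rewrite (absvM hU) (absvV hU) (absvX hU) absv_t -[X in _ < X]mulr1.
by rewrite ltr_pM2l ?invr_gt0 ?qexp_gt0 // (absvD_lt hU) ?(absvN hU).
Qed.

Lemma dirichlet_approx xi N : in_Laurent xi -> ~ in_FqT xi ->
  exists s p, [/\ s != 0, (size s <= N.+1)%N & 0 < absv (evT s * xi - evT p) < (q ^+ N)^-1].
Proof.
move=> Lxi xi_irr.
have frac s : exists p, absv (evT s * xi - evT p) < 1.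
  by apply: in_Laurent_floor; have := in_Laurent_affine s 0 Lxi; rewrite rmorph0 addr0.
have [fl fl_lt] := choice frac; pose y s := evT s * xi - evT (fl s).
have Ly s : in_Laurent (y s) by rewrite /y -rmorphN; apply: in_Laurent_affine.
have [G G_lt] := choice (fun s => in_Laurent_digits N (Ly s) (fl_lt s)).
(* Pigeonhole: there are more candidates [s] of size at most [N.+1] than
   possible leading digits [G s] of the fractional part of [s * xi]. *)
have [s1 [s2 [s12 G12]]] : exists s1 s2 : {poly_N.+1 F}, s1 != s2 /\ G s1 = G s2.
  apply: contrapT => G_inj.
  have : injective (fun s : {poly_N.+1 F} => G s).
    by move=> s1 s2 G12; apply: contrapT => /eqP s12; apply: G_inj; exists s1, s2.
  move/leq_card; rewrite !card_npoly leqNgt ltn_exp2l ?ltnSn //.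
  exact: card_finNzRing_gt1.
have s0 : (s1 - s2 : {poly F}) != 0 by rewrite subr_eq0 (inj_eq val_inj).
have diff : evT (s1 - s2) * xi - evT (fl s1 - fl s2) = y s1 - y s2.
  by rewrite /y !rmorphB /=; ring.
exists (s1 - s2 : {poly F}), (fl s1 - fl s2); split => //.
rewrite diff (absv_gt0 hU) /=; first by apply: (absvB_lt_of_digits (G_lt s1)); rewrite G12.
apply: contra_notN xi_irr; rewrite -diff subr_eq0 => /eqP xi_eq.
exists (fl s1 - fl s2), (s1 - s2); split => //.
by rewrite -xi_eq mulrAC divff ?mul1r ?evT_neq0.
Qed.

Lemma absT_numerator_le s p x : s != 0 -> absv (evT s * x - evT p) <= 1 ->
  absT p <= absT s * Num.max 1 (absv x).
Proof.
move=> s0 sxp_le1; have s_ge1 := absT_ge1 s0.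
rewrite -absv_evT -[evT p](subKr (evT s * x)); apply: (absvD_le hU).
  by rewrite (absvM hU) absv_evT ler_wpM2l ?absT_ge0 // le_max lexx orbT.
rewrite (absvN hU); apply: le_trans sxp_le1 _.
by rewrite -[X in X <= _]mulr1 ler_pM // le_max lexx.
Qed.

Lemma exists_qexp_large (e M w : R) : 0 < e -> 1 <= M -> w < 1 ->
  exists N, (q ^+ N)^-1 < e /\ (q ^+ N)^-1 <= (q ^+ N * M) `^ (- w).
Proof.
move=> e_gt0 M_ge1 w_lt1; have lnq_gt0 : 0 < ln q by rewrite ln_gt0 ?q_gt1.
pose K := Num.max (- ln e / ln q) (w * ln M / ((1 - w) * ln q)).
have [N] : exists N : nat, K < N%:R by exists (Num.trunc K).+1; apply: truncnS_gt.
rewrite gt_max !ltr_pdivrMr ?mulr_gt0 ?subr_gt0 // => /andP[N_e N_M].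
have qN : q ^+ N = expR (N%:R * ln q) by rewrite expRM_natl lnK // posrE; apply: lt_trans q_gt1.
have lnM_ge0 : 0 <= ln M by rewrite ln_ge0.
exists N; rewrite qN -expRN; split.
  by rewrite -[e]lnK ?posrE // ltr_expR; lra.
have M_gt0 : 0 < M by apply: lt_le_trans M_ge1.
rewrite powR_expR ?mulr_gt0 ?expR_gt0 // ler_expR lnM ?posrE ?expR_gt0 // expRK.
nra.
Qed.

Lemma w2_ge1 xi : in_Laurent xi -> ~ in_FqT xi -> (1%:E <= w2 iF t absv xi)%E.
Proof.
move=> Lxi xi_irr; apply: (@le_ereal_sup_itv _ _ 0) => // w.
rewrite /= in_itv /= => /andP[w_gt0 w_lt1]; pose M := Num.max 1 (absv xi).
have M_ge1 : 1 <= M by rewrite le_max lexx.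
apply: (@infinite_of_small_values _ _ _ (fun P => absv (evP P xi))) => e e_gt0.
have [N [qN_e qN_w]] := exists_qexp_large e_gt0 M_ge1 w_lt1.
have [s [p [s0 sN /andP[approx_gt0 approx_lt]]]] := dirichlet_approx N Lxi xi_irr.
pose P := s%:P * 'X + (- p)%:P.
have sP : size P = 2%N by rewrite size_linear.
have evP_xi : evP P xi = evT s * xi - evT p.
  by rewrite evP_quadratic ?sP // !coef_linear rmorph0 mul0r addr0 rmorphN addrC.
have sT_le : absT s <= q ^+ N by apply: absT_le_qexp.
have height_le_qNM : height P <= q ^+ N * M :> R.
  apply: height_le => [|i]; first by rewrite mulr_ge0 ?ltW ?qexp_gt0 ?(lt_le_trans ltr01).
  rewrite coef_linear; case: ifP => _; last case: ifP => _.
  - rewrite absTN; apply: le_trans (absT_numerator_le (x := xi) s0 _) _.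
      by rewrite ltW // (lt_le_trans approx_lt) // invf_le1 ?qexp_gt0 ?qexp_ge1.
    by rewrite ler_pM ?absT_ge0 ?(le_trans ler01 M_ge1).
  - by apply: le_trans sT_le _; rewrite ler_pMr ?qexp_gt0.
  - by rewrite /absT eqxx mulr_ge0 ?ltW ?qexp_gt0 ?(lt_le_trans ltr01).
have height_ge1 : 1 <= height P :> R.
  apply: le_trans (absT_ge1 s0) _.
  by have := absT_coef_le_height P 1; rewrite coef_linear.
exists P; rewrite /= evP_xi approx_gt0 (lt_trans approx_lt qN_e); split => //.
split; first by rewrite sP.
split => //; apply: le_trans (ltW approx_lt) (le_trans qN_w _).
exact: powRN_le (lt_le_trans ltr01 height_ge1) height_le_qNM (ltW w_gt0).
Qed.

Section QuadraticApproximations.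
Variables (xi : L) (alpha alpha' : nat -> L) (P : nat -> {poly {poly F}}).
Hypotheses (Lxi : in_Laurent xi) (xi_irr : ~ in_FqT xi).
Hypothesis minP : forall j, is_minpoly iF t (alpha j) (P j).
Hypothesis sizeP : forall j, size (P j) = 3%N.
Hypothesis conjP : forall j, evP (P j) (alpha' j) = 0 /\ alpha' j != alpha j.
Hypothesis xi_alpha : forall j, xi != alpha j.
Hypothesis height_cvg : (fun j => height (P j) : R) @ \oo --> +oo.

Local Notation H j := (height (P j) : R).

Let height_large M : \forall j \near \oo, M < H j.
Proof. by move/cvgryPgt: height_cvg; apply. Qed.

Let root_alpha j : evP (P j) (alpha j) = 0.
Proof. by case: (minP j). Qed.

Let xi_alpha_gt0 j : 0 < absv (xi - alpha j).
Proof. by rewrite (absv_gt0 hU) // subr_eq0. Qed.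

Let conj_gt0 j : 0 < absv (alpha j - alpha' j).
Proof. by rewrite (absv_gt0 hU) // subr_eq0 eq_sym; case: (conjP j). Qed.

Let lead_le_height j : absv (evT (P j)`_2) <= H j.
Proof. by rewrite absv_evT absT_coef_le_height. Qed.

Lemma w2star_ge_exponent g1 :
  (fun j => - ln (absv (xi - alpha j)) / ln (H j)) @ \oo --> g1 ->
  ((g1 - 1)%:E <= w2star iF t absv xi)%E.
Proof.
move=> g1_lim; have [g1_le0|g1_gt0] := lerP g1 0.
  by apply: le_trans (w2star_geN1 Lxi xi_irr); rewrite lee_fin; lra.
apply: (@le_ereal_sup_itv _ _ (Num.max (-1) (g1 - 2))) => [|w].
  by rewrite gt_max; apply/andP; split; lra.
rewrite /= in_itv /= gt_max => /andP[/andP[w_gtN1 _] w_lt].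
apply: (@infinite_of_small_values _ _ _ (fun a => absv (xi - a))) => e e_gt0.
have [M M_small] : exists M, forall h, M < h -> h `^ (- (w + 1)) < e.
  by apply: powRN_small; lra.
have /filter_ex[j [Hj_gt1 Hj_gtM w_lt_rj]] :
    \forall j \near \oo, [/\ 1 < H j, M < H j & w + 1 < - ln (absv (xi - alpha j)) / ln (H j)].
  near=> j; split; near: j; [exact: height_large | exact: height_large |].
  by apply: cvgr_gt g1_lim _ _; lra.
have dist_le : absv (xi - alpha j) <= H j `^ (- (w + 1)).
  by apply: le_powRN_exponent => //; apply: ltW.
exists (alpha j); rewrite xi_alpha_gt0 (le_lt_trans dist_le (M_small _ Hj_gtM)).
split => //; exists (P j); rewrite sizeP -opprD; split => //.
Unshelve. all: by end_near.
Qed.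

Lemma conj_exponent_le1 g2 :
  (fun j => - ln (absv (alpha j - alpha' j)) / ln (H j)) @ \oo --> g2 -> g2 <= 1.
Proof.
move=> g2_lim; rewrite leNgt; apply/negP => g2_gt1.
have /filter_ex[j [Hj_gt1 rj_gt]] : \forall j \near \oo,
    1 < H j /\ (1 + g2) / 2 < - ln (absv (alpha j - alpha' j)) / ln (H j).
  near=> j; split; near: j; first exact: height_large.
  by apply: cvgr_gt g2_lim _ _; lra.
have [root' conj_neq] := conjP j; rewrite eq_sym in conj_neq.
have Hj_gt0 : 0 < H j by apply: lt_trans Hj_gt1.
have dist_lt : absv (alpha j - alpha' j) < (H j)^-1.
  rewrite -powR_inv1 ?ltW //.
  apply: le_lt_trans (le_powRN_exponent (conj_gt0 j) Hj_gt1 (ltW rj_gt)) _.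
  by apply: ltr_powR_gt1 => //; lra.
have := discriminant_bound (sizeP j) conj_neq (root_alpha j) root'.
have := ler_wpM2r (ltW (conj_gt0 j)) (lead_le_height j).
have : H j * (H j)^-1 = 1 by rewrite mulfV ?gt_eqF.
have := conj_gt0 j; nra.
Unshelve. all: by end_near.
Qed.

Lemma w2_ge_exponent g1 g2 :
  (fun j => - ln (absv (xi - alpha j)) / ln (H j)) @ \oo --> g1 ->
  (fun j => - ln (absv (alpha j - alpha' j)) / ln (H j)) @ \oo --> g2 ->
  ((g1 + g2 - 1)%:E <= w2 iF t absv xi)%E.
Proof.
move=> g1_lim g2_lim; have g2_le1 := conj_exponent_le1 g2_lim.
have [sum_le1|sum_gt1] := lerP (g1 + g2 - 1) 1.
  by apply: le_trans (w2_ge1 Lxi xi_irr); rewrite lee_fin.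
apply: (@le_ereal_sup_itv _ _ 1) => // w; rewrite /= in_itv /= => /andP[w_gt1 w_lt].
pose d := Num.min ((g1 + g2 - 1 - w) / 2) ((g1 - g2) / 4).
have d_gt0 : 0 < d by rewrite lt_min; apply/andP; split; lra.
have d_le1 : d <= (g1 + g2 - 1 - w) / 2 by rewrite ge_min lexx.
have d_le2 : d <= (g1 - g2) / 4 by rewrite ge_min lexx orbT.
apply: (@infinite_of_small_values _ _ _ (fun Q => absv (evP Q xi))) => e e_gt0.
have [M M_small] : exists M, forall h, M < h -> h `^ (- w) < e by apply: powRN_small; lra.
have /filter_ex[j [Hj_gt1 Hj_gtM r1_gt /andP[r2_gt r2_lt]]] : \forall j \near \oo,
    [/\ 1 < H j, M < H j, g1 - d < - ln (absv (xi - alpha j)) / ln (H j)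
      & g2 - d < - ln (absv (alpha j - alpha' j)) / ln (H j) < g2 + d].
  near=> j; split; [| | |apply/andP; split]; near: j; try exact: height_large.
  - by apply: cvgr_gt g1_lim _ _; lra.
  - by apply: cvgr_gt g2_lim _ _; lra.
  - by apply: cvgr_lt g2_lim _ _; lra.
have dist_le := le_powRN_exponent (xi_alpha_gt0 j) Hj_gt1 (ltW r1_gt).
have conj_le := le_powRN_exponent (conj_gt0 j) Hj_gt1 (ltW r2_gt).
have conj_ge := ge_powRN_exponent (conj_gt0 j) Hj_gt1 (ltW r2_lt).
have dist_lt_conj : absv (xi - alpha j) < absv (alpha j - alpha' j).
  by apply: le_lt_trans dist_le (lt_le_trans _ conj_ge); apply: ltr_powR_gt1 => //; lra.
have [root' conj_neq] := conjP j; rewrite eq_sym in conj_neq.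
have value := absv_evP_near_root (sizeP j) conj_neq (root_alpha j) root' dist_lt_conj.
have disc := discriminant_bound (sizeP j) conj_neq (root_alpha j) root'.
have Hj_gt0 : 0 < H j by apply: lt_trans Hj_gt1.
have value_le : absv (evP (P j) xi) <= H j `^ (- w).
  rewrite value; apply: le_trans (_ : H j * H j `^ (- (g2 - d)) * H j `^ (- (g1 - d)) <= _).
    by rewrite !ler_pM ?mulr_ge0 ?(absv_ge0 hU) ?powR_ge0.
  rewrite -{1}(powRr1 (ltW Hj_gt0)) -!powRD ?(gt_eqF Hj_gt0) ?implybT //.
  by apply: ler_powR; [exact: ltW | lra].
exists (P j); rewrite /= value mulr_gt0 ?(lt_le_trans ltr01 disc) //= -value.
by rewrite (le_lt_trans value_le (M_small _ Hj_gtM)); split => //; rewrite sizeP.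
Unshelve. all: by end_near.
Qed.

End QuadraticApproximations.

End FunctionFieldApproximation.

Theorem lemma4p12 (F : finFieldType) (L : closedFieldType) (R : realType)
  (iF : {rmorphism F -> L}) (t : L) (absv : L -> R)
  (habs : is_abs_value iF t absv) (htr : transcendental_T iF t)
  (xi : L) (hxiK : in_Laurent iF t absv xi) (hxi : ~ in_FqT iF t xi)
  (alpha alpha' : nat -> L) (P : nat -> {poly {poly F}})
  (hmin : forall j, is_minpoly iF t (alpha j) (P j))
  (hdeg : forall j, size (P j) = 3%N)
  (hconj : forall j, evP iF t (P j) (alpha' j) = 0 /\ alpha' j != alpha j)
  (hne : forall j, xi != alpha j)
  (hincr : forall j, (height (P j) : R) < height (P j.+1))
  (hdiv : (fun j => height (P j) : R) @ \oo --> +oo)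
  (g1 g2 : R)
  (hg1 : (fun j => - ln (absv (xi - alpha j)) / ln (height (P j) : R)) @ \oo --> g1)
  (hg2 : (fun j => - ln (absv (alpha j - alpha' j)) / ln (height (P j) : R)) @ \oo --> g2) :
  ((g1 - 1)%:E <= w2star iF t absv xi)%E /\
  ((g1 + g2 - 1)%:E <= w2 iF t absv xi)%E.
Proof.
split.
- exact: (w2star_ge_exponent habs htr hxiK hxi hmin hdeg hne hdiv hg1).
- exact: (w2_ge_exponent habs htr hxiK hxi hmin hdeg hconj hne hdiv hg1 hg2).
Qed.
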